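(* Let $\mathcal{W}=(A,\to,\mathbb{S},\mathsf{f}_{\mathtt{NF}},\mathsf{Aggr})$ be a wARS. Then (i) $\mathcal{W}$ is not bounded if $\mathsf{f}_{\mathtt{NF}}(a)=\top$ for some $a\in\mathtt{NF}_\to$; and (ii) $\mathcal{W}$ is bounded if $\mathsf{f}_{\mathtt{NF}}$ is universally bounded and all aggregator functions $\mathsf{Aggr}_{a\to B}$ are selective.
   Context: A semiring $\mathbb{S}=(S,\oplus,\odot,\mathbf{0},\mathbf{1})$: $(S,\oplus,\mathbf{0})$ commutative monoid, $(S,\odot,\mathbf{1})$ monoid, $\odot$ distributes over $\oplus$, $\mathbf{0}$ annihilator. Natural order: $s\preccurlyeq t$ iff $s\oplus u=t$ for some $u$. A complete lattice semiring is one where $\preccurlyeq$ is antisymmetric and every subset $T\subseteq S$ has a least upper bound $\bigsqcup T$; $\top=\bigsqcup S$. Infinite sums/products of a sequence $[s_1,s_2,\dots]$ are the suprema of the finite partial sums/products. $\mathrm{Seq}(X)$: non-empty finite or infinite sequences over $X$. An sARS is $(A,\to)$ with $\to\subseteq A\times\mathrm{Seq}(A)$; $\mathtt{NF}_\to$ is the set of $a$ with no $B$ such that $a\to B$. An $(A,\to)$-reduction tree (RT) is a labeled ordered tree whose nodes $v$ carry labels $a_v\in A$ and whose ordered child sequence $vE$ is either empty or satisfies $a_v\to[a_w\mid w\in vE]$. Aggregators: smallest set containing constants $s\in S$, variables $v_1,v_2,\dots$, and $\bigoplus F$, $\bigodot F$ for non-empty finite or infinite sequences $F$ of aggregators; they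 induce functions $S^n\to S$ by substitution $v_i\mapsto$ $i$-th argument. A wARS $(A,\to,\mathbb{S},\mathsf{f}_{\mathtt{NF}},\mathsf{Aggr})$ consists of an sARS $(A,\to)$, a complete lattice semiring $\mathbb{S}$, a map $\mathsf{f}_{\mathtt{NF}}:\mathtt{NF}_\to\to S$, and for each $a\to B$ an aggregator $\mathsf{Aggr}_{a\to B}$ with variable indices $\le|B|$, viewed as a function $S^{|B|}\to S$. Weight of a finite-depth RT $\mathfrak{T}$ at node $v$: $\mathsf{f}_{\mathtt{NF}}(a_v)$ if $a_v\in\mathtt{NF}_\to$; $\mathbf{0}$ if $v$ is a leaf with $a_v\notin\mathtt{NF}_\to$; $\mathsf{Aggr}_{a_v\to B}[$weights of the children in order$]$ with $B=[a_w\mid w\in vE]$ otherwise; $[\![\mathfrak{T}]\!]$ is the weight at the root. $[\![a]\!]=\bigsqcup\{[\![\mathfrak{T}]\!]\mid\mathfrak{T}$ an RT of finite depth with root labeled $a\}$. The wARS is bounded if $[\![a]\!]\neq\top$ for all $a\in A$. $\mathsf{f}_{\mathtt{NF}}$ is universally bounded if there is $C\in S\setminus\{\top\}$ with $\mathsf{f}_{\mathtt{NF}}(a)\preccurlyeq C$ for all $a\in\mathtt{NF}_\to$. An aggregator function $\mathsf{Aggr}_{a\to B}:S^{|B|}\to S$ is selective if for every argument $[s_1,s_2,\dots]\in S^{|B|}$ there is $1\le i\le|B|$ with $\mathsf{Aggr}_{a\to B}[s_1,s_2,\dots]=s_i$. *)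

From Stdlib Require Import ClassicalEpsilon.
From mathcomp Require Import all_boot.

Set Implicit Arguments.
Unset Strict Implicit.
Unset Printing Implicit Defensive.

Definition natle (X : Type) (add : X -> X -> X) (x y : X) : Prop :=
  exists u, add x u = y.

Definition is_lub_for (X : Type) (add : X -> X -> X) (T : X -> Prop) (l : X) :=
  (forall t, T t -> natle add t l) /\
  (forall l', (forall t, T t -> natle add t l') -> natle add l l').

Record clsemiring := CLSemiring {
  car : Type;
  sadd : car -> car -> car;
  smul : car -> car -> car;
  szero : car;
  sone : car;
  saddA : forall x y z, sadd x (sadd y z) = sadd (sadd x y) z;
  saddC : forall x y, sadd x y = sadd y x;
  sadd0 : forall x, sadd szero x = x;
  smulA : forall x y z, smul x (smul y z) = smul (smul x y) z;
  smul1l : forall x, smul sone x = x;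
  smul1r : forall x, smul x sone = x;
  smulDl : forall x y z, smul (sadd x y) z = sadd (smul x z) (smul y z);
  smulDr : forall x y z, smul x (sadd y z) = sadd (smul x y) (smul x z);
  smul0l : forall x, smul szero x = szero;
  smul0r : forall x, smul x szero = szero;
  sle_antisym : forall x y, natle sadd x y -> natle sadd y x -> x = y;
  scomplete : forall T : car -> Prop, exists l, is_lub_for sadd T l
}.

Definition sle (S : clsemiring) (x y : car S) : Prop := natle (@sadd S) x y.

Definition sup (S : clsemiring) (T : car S -> Prop) : car S :=
  proj1_sig (constructive_indefinite_description _ (@scomplete S T)).

Definition top (S : clsemiring) : car S := sup (fun _ : car S => True).

(* Seq(X): non-empty finite or infinite sequences.
   SFin n f = [f 0; ...; f n]  (n.+1 elements),  SInf f = [f 0; f 1; ...]. *)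
Inductive Seq (X : Type) : Type :=
| SFin (n : nat) (f : 'I_n.+1 -> X)
| SInf (f : nat -> X).

Definition smap (X Y : Type) (g : X -> Y) (s : Seq X) : Seq Y :=
  match s with
  | SFin n f => SFin (fun i => g (f i))
  | SInf f => SInf (fun i => g (f i))
  end.

(* 1-based positions of a sequence: 1 <= i <= |B|. *)
Definition in_range (X : Type) (B : Seq X) (i : nat) : Prop :=
  (1 <= i) /\ match B with SFin n _ => i <= n.+1 | SInf _ => True end.

(* Aggregators. AVar i is the variable v_i (1-based). *)
Inductive aggr (S : clsemiring) : Type :=
| AConst (c : car S)
| AVar (i : nat)
| ASum (F : Seq (aggr S))
| AProd (F : Seq (aggr S)).

(* Evaluation of an aggregator, substituting v_i |-> s i.
   Infinite sums/products are suprema of finite (non-empty) partial sums/products. *)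
Fixpoint aeval (S : clsemiring) (s : nat -> car S) (e : aggr S) : car S :=
  match e with
  | AConst c => c
  | AVar i => s i
  | ASum F =>
      match F with
      | SFin n f => \big[@sadd S/szero S]_(i < n.+1) aeval s (f i)
      | SInf f => sup (fun x => exists n,
                         x = \big[@sadd S/szero S]_(i < n.+1) aeval s (f i))
      end
  | AProd F =>
      match F with
      | SFin n f => \big[@smul S/sone S]_(i < n.+1) aeval s (f i)
      | SInf f => sup (fun x => exists n,
                         x = \big[@smul S/sone S]_(i < n.+1) aeval s (f i))
      end
  end.

Fixpoint vars_in (S : clsemiring) (X : Type) (B : Seq X) (e : aggr S) : Prop :=
  match e with
  | AConst _ => True
  | AVar i => in_range B i
  | ASum F | AProd F =>
      match F with
      | SFin n f => forall i, vars_in B (f i)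
      | SInf f => forall i, vars_in B (f i)
      end
  end.

Definition NF (A : Type) (step : A -> Seq A -> Prop) (a : A) : Prop :=
  ~ exists B, step a B.

(* Labeled ordered trees; ch = None means no children (a leaf). *)
Inductive rtree (A : Type) : Type :=
| RNode (a : A) (ch : option (Seq (rtree A))).

Definition label (A : Type) (t : rtree A) : A := let: RNode a _ := t in a.

Fixpoint is_RT (A : Type) (step : A -> Seq A -> Prop) (t : rtree A) : Prop :=
  match t with
  | RNode _ None => True
  | RNode a (Some (SFin n f)) =>
      step a (SFin (fun i => label (f i))) /\ forall i, is_RT step (f i)
  | RNode a (Some (SInf f)) =>
      step a (SInf (fun i => label (f i))) /\ forall i, is_RT step (f i)
  end.

Fixpoint depth_le (A : Type) (t : rtree A) (d : nat) : Prop :=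
  match t with
  | RNode _ None => True
  | RNode _ (Some (SFin n f)) =>
      match d with 0 => False | d'.+1 => forall i, depth_le (f i) d' end
  | RNode _ (Some (SInf f)) =>
      match d with 0 => False | d'.+1 => forall i, depth_le (f i) d' end
  end.

Definition finite_depth (A : Type) (t : rtree A) : Prop := exists d, depth_le t d.

(* Weight of a tree in a wARS (A, step, S, fNF, Aggr).
   fNF is only used on normal forms; Aggr a B is only used when a -> B. *)
Fixpoint weight (A : Type) (step : A -> Seq A -> Prop) (S : clsemiring)
    (fNF : A -> car S) (Aggr : A -> Seq A -> aggr S) (t : rtree A) : car S :=
  match t with
  | RNode a ch =>
      if excluded_middle_informative (NF step a) then fNF a else
      match ch with
      | None => szero S
      | Some (SFin n f) =>
          aeval (fun i => match i with
                          | 0 => szero S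
                          | k.+1 => if k < n.+1
                                    then weight step fNF Aggr (f (inord k))
                                    else szero S
                          end)
                (Aggr a (SFin (fun i => label (f i))))
      | Some (SInf f) =>
          aeval (fun i => match i with
                          | 0 => szero S
                          | k.+1 => weight step fNF Aggr (f k)
                          end)
                (Aggr a (SInf (fun i => label (f i))))
      end
  end.

Definition sem (A : Type) (step : A -> Seq A -> Prop) (S : clsemiring)
    (fNF : A -> car S) (Aggr : A -> Seq A -> aggr S) (a : A) : car S :=
  sup (fun w => exists t, is_RT step t /\ finite_depth t /\ label t = a /\
                          w = weight step fNF Aggr t).

Definition bounded (A : Type) (step : A -> Seq A -> Prop) (S : clsemiring)
    (fNF : A -> car S) (Aggr : A -> Seq A -> aggr S) : Prop :=
  forall a, sem step fNF Aggr a <> top S.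

Definition univ_bounded (A : Type) (step : A -> Seq A -> Prop) (S : clsemiring)
    (fNF : A -> car S) : Prop :=
  exists C : car S, C <> top S /\ forall a, NF step a -> sle (fNF a) C.

Definition selective (S : clsemiring) (X : Type) (e : aggr S) (B : Seq X) : Prop :=
  forall s : nat -> car S, exists i, in_range B i /\ aeval s e = s i.

(* Part (i): a normal form whose weight is top is already a one-node reduction
   tree of weight top, so its semantics is top.
   Part (ii): a selective aggregator returns the weight of one of the children,
   so by induction on the depth the weight of every finite-depth reduction tree
   is either 0 (a leaf that is not a normal form) or the weight of some normal
   form; both are below the universal bound C, hence so is every [[a]], and
   [[a]] = top would force C = top. *)

From Stdlib Require Import ClassicalEpsilon.
From mathcomp Require Import all_boot.

Set Implicit Arguments.
Unset Strict Implicit.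
Unset Printing Implicit Defensive.

Section LeastUpperBounds.

Variable S : clsemiring.

Lemma sup_is_lub (T : car S -> Prop) : is_lub_for (@sadd S) T (sup T).
Proof. exact: proj2_sig (constructive_indefinite_description _ (@scomplete S T)). Qed.

Lemma sup_ub (T : car S -> Prop) (x : car S) : T x -> sle x (sup T).
Proof. by case: (sup_is_lub T) => ub _; apply: ub. Qed.

Lemma sup_least (T : car S -> Prop) (c : car S) :
  (forall x, T x -> sle x c) -> sle (sup T) c.
Proof. by case: (sup_is_lub T) => _; apply. Qed.

Lemma sle0x (x : car S) : sle (szero S) x.
Proof. by exists x; rewrite sadd0. Qed.

Lemma slex_top (x : car S) : sle x (top S).
Proof. exact: sup_ub. Qed.

Lemma top_sle (x : car S) : sle (top S) x -> x = top S.
Proof. by move=> topx; apply: sle_antisym (slex_top x) topx. Qed.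

End LeastUpperBounds.

Section WeightedARS.

Variables (A : Type) (step : A -> Seq A -> Prop) (S : clsemiring).
Variables (fNF : A -> car S) (Aggr : A -> Seq A -> aggr S).

Local Notation weight := (weight step fNF Aggr).
Local Notation sem := (sem step fNF Aggr).

Lemma weight_leaf_NF (a : A) : NF step a -> weight (RNode a None) = fNF a.
Proof. by move=> nf_a /=; case: excluded_middle_informative. Qed.

Lemma weight_le_sem (t : rtree A) :
  is_RT step t -> finite_depth t -> sle (weight t) (sem (label t)).
Proof. by move=> rt_t fd_t; apply: sup_ub; exists t. Qed.

Lemma sem_le (a : A) (c : car S) :
  (forall t, is_RT step t -> finite_depth t -> label t = a -> sle (weight t) c) ->
  sle (sem a) c.
Proof. by move=> le_c; apply: sup_least => _ [t [rt_t [fd_t [la ->]]]]; apply: le_c. Qed.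

Lemma sem_NF_top (a : A) : NF step a -> fNF a = top S -> sem a = top S.
Proof.
move=> nf_a fNF_top; apply: top_sle; rewrite -fNF_top -weight_leaf_NF //.
by apply: (weight_le_sem (t := RNode a None)) => //; exists 0.
Qed.

Definition NF_weight (w : car S) : Prop :=
  w = szero S \/ exists2 b, NF step b & w = fNF b.

Hypothesis Aggr_selective : forall a B, step a B -> selective (Aggr a B) B.

Lemma selective_weight_NF (d : nat) (t : rtree A) :
  is_RT step t -> depth_le t d -> NF_weight (weight t).
Proof.
elim: d t => [|d IHd] [a [[n f|f]|]] //= rt_t depth_t;
  case: excluded_middle_informative => nf_a; try by [right; exists a | left].
(* Variables are 1-based: [in_range] rules out v_0, and v_(i+1) is child i. *)
- case: rt_t => step_a rt_f.
  set s := (fun i : nat => _).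
  have [[|i] [[//= _ le_i_n] ->]] := Aggr_selective step_a s.
  by rewrite le_i_n; apply: IHd.
- case: rt_t => step_a rt_f.
  set s := (fun i : nat => _).
  have [[|i] [[//= _ _] ->]] := Aggr_selective step_a s.
  exact: IHd.
Qed.

Lemma sem_le_univ_bound (C : car S) :
  (forall a, NF step a -> sle (fNF a) C) -> forall a, sle (sem a) C.
Proof.
move=> le_fNF a; apply: sem_le => t rt_t [d depth_t] _.
have [->|[b nf_b ->]] := selective_weight_NF rt_t depth_t.
- exact: sle0x.
- exact: le_fNF.
Qed.

End WeightedARS.

Theorem theorem25 (A : Type) (step : A -> Seq A -> Prop) (S : clsemiring)
    (fNF : A -> car S) (Aggr : A -> Seq A -> aggr S)
    (Aggr_wf : forall a B, step a B -> vars_in B (Aggr a B)) :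
  ((exists a, NF step a /\ fNF a = top S) -> ~ bounded step fNF Aggr) /\
  (univ_bounded step fNF ->
   (forall a B, step a B -> selective (Aggr a B) B) ->
   bounded step fNF Aggr).
Proof.
split.
- move=> [a [nf_a fNF_top]] bdd.
  exact: (bdd a) (sem_NF_top Aggr nf_a fNF_top).
- move=> [C [C_top le_fNF]] Aggr_selective a sem_top.
  apply: C_top; apply: top_sle; rewrite -sem_top.
  exact: sem_le_univ_bound.
Qed.
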